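(* Let $n\ge 3$ be an integer and let $\varphi$ be the automorphism of $F$ with $\varphi(x)=y$, $\varphi(y)=x$. Then $(\varphi(r_1),\varphi(r_2))\sim_{AC}(r_1,r_2)$, where $(r_1,r_2)=\mathrm{AK}(n)=(xyxy^{-1}x^{-1}y^{-1},\ x^ny^{-(n+1)})$.
   Context: $F=F(x,y)$ is the free group on $\{x,y\}$. The Akbulut–Kurby pair is $\mathrm{AK}(n)=(xyxy^{-1}x^{-1}y^{-1},\ x^{n}y^{-(n+1)})$, i.e. the presentation $\langle x,y\mid xyx=yxy,\ x^n=y^{n+1}\rangle$ of the trivial group. The Andrews–Curtis (AC) moves on a pair $(r_1,r_2)\in F^2$ are: replace $r_i$ by $r_ir_j$ ($i\ne j$); replace $r_i$ by $r_i^{-1}$; replace $r_i$ by $w^{-1}r_iw$ for some $w\in F$. Two pairs are AC-equivalent, $\sim_{AC}$, if one can be obtained from the other by a finite sequence of AC-moves. *)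

(* The free group F = F(x,y) is modelled by freely reduced words. *)
From mathcomp Require Import all_boot.
From Stdlib Require Import Relations.
Set Implicit Arguments. Unset Strict Implicit. Unset Printing Implicit Defensive.

(* A letter is (generator, inverted?); generator false = x, true = y. *)
Definition letter := (bool * bool)%type.
Definition word := seq letter.

Definition x_ : letter := (false, false).
Definition y_ : letter := (true, false).
Definition linv (a : letter) : letter := (a.1, ~~ a.2).

Definition reduce (w : word) : word :=
  foldr (fun a acc => match acc with
                      | b :: t => if b == linv a then t else a :: acc
                      | [::] => [:: a]
                      end) [::] w.

Definition fmul (u v : word) : word := reduce (u ++ v).
Definition finv (w : word) : word := reduce (rev (map linv w)).
Definition fconj (r w : word) : word := reduce (finv w ++ r ++ w).

Definition gpow (g : letter) (k : nat) : word := nseq k g.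
Definition gnpow (g : letter) (k : nat) : word := nseq k (linv g).

Definition phi (w : word) : word := reduce (map (fun a : letter => (~~ a.1, a.2)) w).

Inductive ac_move : word * word -> word * word -> Prop :=
| ac_mul1 r1 r2 : ac_move (r1, r2) (fmul r1 r2, r2)
| ac_mul2 r1 r2 : ac_move (r1, r2) (r1, fmul r2 r1)
| ac_inv1 r1 r2 : ac_move (r1, r2) (finv r1, r2)
| ac_inv2 r1 r2 : ac_move (r1, r2) (r1, finv r2)
| ac_conj1 r1 r2 (w : word) : ac_move (r1, r2) (fconj r1 w, r2)
| ac_conj2 r1 r2 (w : word) : ac_move (r1, r2) (r1, fconj r2 w).

Definition ac_equiv : word * word -> word * word -> Prop :=
  clos_refl_trans (word * word) ac_move.

Definition AK1 : word := reduce [:: x_; y_; x_; linv y_; linv x_; linv y_].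
Definition AK2 (n : nat) : word := reduce (gpow x_ n ++ gnpow y_ n.+1).

(** The swap [phi] of the generators is inner modulo the relator
    [r1 = xyx (yxy)^-1]: in [F / <<r1>>] one has [x (xyx) = (xyx) y] and
    [y (xyx) = (xyx) x], so conjugation by [xyx] induces [phi].  Since
    [phi r1 = r1^-1], inverting the first component and conjugating the second
    one by [xyx] brings [(phi r1, phi r2)] to [(r1, w)] with [w = r2] in
    [F / <<r1>>], and while [r1] is kept in the pair, the second component may
    be changed within its class modulo [<<r1>>] by AC-moves. *)

From mathcomp Require Import ssreflect ssrfun ssrbool eqtype ssrnat seq.
From Stdlib Require Import Relations Setoid Morphisms.

Definition push (a : letter) (acc : word) : word :=
  match acc with b :: t => if b == linv a then t else a :: acc | [::] => [:: a] end.

Lemma reduceE w : reduce w = foldr push [::] w. Proof. by []. Qed.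

Lemma reduce_cons a w : reduce (a :: w) = push a (reduce w). Proof. by []. Qed.

Lemma reduce_cat u v : reduce (u ++ v) = foldr push (reduce v) u.
Proof. by rewrite !reduceE foldr_cat. Qed.

Fixpoint reduced (w : word) : bool :=
  if w is b :: (c :: _) as t then (c != linv b) && reduced t else true.

Lemma reduced_cons a w :
  reduced (a :: w) = (if w is c :: _ then c != linv a else true) && reduced w.
Proof. by case: w. Qed.

Lemma linvK : involutive linv.
Proof. by case=> a1 a2; rewrite /linv /= negbK. Qed.

Lemma reduced_push a acc : reduced acc -> reduced (push a acc).
Proof.
case: acc => [|b t] // red_bt; rewrite /push; case: ifP => b_linv.
  by move: red_bt; rewrite reduced_cons => /andP[].
by rewrite reduced_cons red_bt b_linv.
Qed.

Lemma push_linvK a acc : reduced acc -> push a (push (linv a) acc) = acc.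
Proof.
case: acc => [|b t] /=; first by rewrite eqxx.
rewrite linvK; case: eqP => [->|_] red_bt; last by rewrite /= eqxx.
by case: t red_bt => [|c t] //= /andP[/negbTE ->].
Qed.

Lemma reduced_foldr_push acc w : reduced acc -> reduced (foldr push acc w).
Proof. by move=> red_acc; elim: w => //= a w; apply: reduced_push. Qed.

Lemma reduced_reduce w : reduced (reduce w).
Proof. exact: reduced_foldr_push. Qed.

Lemma foldr_push_push acc a w : reduced acc -> reduced w ->
  foldr push acc (push a w) = push a (foldr push acc w).
Proof.
move=> red_acc; case: w => [|b t] //= red_bt; case: ifP => [/eqP ->|] //=.
by rewrite push_linvK // reduced_foldr_push.
Qed.

Lemma foldr_push_reduce acc u :
  reduced acc -> foldr push acc (reduce u) = foldr push acc u.
Proof.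
move=> red_acc; elim: u => // a u IH.
by rewrite reduce_cons /= foldr_push_push ?reduced_reduce // IH.
Qed.

Lemma reduce_reducel u v : reduce (reduce u ++ v) = reduce (u ++ v).
Proof. by rewrite !reduce_cat foldr_push_reduce // reduced_reduce. Qed.

Lemma reduce_idem w : reduce (reduce w) = reduce w.
Proof. by have := reduce_reducel w [::]; rewrite !cats0. Qed.

Lemma reduce_reducer u v : reduce (u ++ reduce v) = reduce (u ++ v).
Proof. by rewrite !reduce_cat reduce_idem. Qed.

Lemma reduce_reducem p q r : reduce (p ++ reduce q ++ r) = reduce (p ++ q ++ r).
Proof. by rewrite reduce_cat reduce_reducel -reduce_cat. Qed.

Lemma reduce_cancel p q a : reduce (p ++ a :: linv a :: q) = reduce (p ++ q).
Proof.
rewrite !reduce_cat; congr foldr.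
by rewrite (reduce_cat [:: a; linv a]) /= push_linvK // reduced_reduce.
Qed.

Definition winv (w : word) : word := rev (map linv w).

Lemma winvK : involutive winv.
Proof. by move=> w; rewrite /winv map_rev revK -map_comp (eq_map linvK) map_id. Qed.

Lemma winv_cons a w : winv (a :: w) = rcons (winv w) (linv a).
Proof. by rewrite /winv /= rev_cons. Qed.

Lemma reduce_cancel_winv p q w : reduce (p ++ w ++ winv w ++ q) = reduce (p ++ q).
Proof.
elim: w p q => // a w IH p q.
rewrite winv_cons -cats1 -!catA /= -cat_rcons IH.
by rewrite -cats1 -catA reduce_cancel.
Qed.

Lemma reduce_cancel_winvl p q w : reduce (p ++ winv w ++ w ++ q) = reduce (p ++ q).
Proof. by rewrite -{2}(winvK w) reduce_cancel_winv. Qed.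

Lemma finvE w : finv w = reduce (winv w). Proof. by []. Qed.

Lemma reduce_winv_reduce w : reduce (winv (reduce w)) = reduce (winv w).
Proof.
rewrite -[winv (reduce w)]cats0 -(reduce_cancel_winv _ [::] w).
by rewrite -(reduce_reducem _ w) cats0 (reduce_cancel_winvl [::]).
Qed.

Lemma finvK w : finv (finv w) = reduce w.
Proof. by rewrite !finvE reduce_winv_reduce winvK. Qed.

Lemma fconjE r w : fconj r w = reduce (winv w ++ r ++ w).
Proof. by rewrite /fconj finvE reduce_reducel. Qed.

Lemma fconjK r w : fconj (fconj r w) (finv w) = reduce r.
Proof.
rewrite /fconj finvK reduce_reducel reduce_reducem finvE -!catA reduce_reducem.
rewrite !catA reduce_reducer -!catA -[w ++ _]cat0s reduce_cancel_winv /=.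
by rewrite -[winv w]cats0 reduce_cancel_winv cats0.
Qed.

Lemma ac_mul_conj r u w :
  ac_equiv (reduce r, u) (reduce r, reduce (u ++ winv w ++ r ++ w)).
Proof.
apply: rt_trans; first exact: rt_step (ac_conj1 _ _ w).
apply: rt_trans; first exact: rt_step (ac_mul2 _ _).
set c := fconj (reduce r) w.
have -> : fmul u c = reduce (u ++ winv w ++ r ++ w).
  by rewrite /c /fmul fconjE reduce_reducer catA reduce_reducem -catA.
have <- : fconj c (finv w) = reduce r by rewrite fconjK reduce_idem.
exact: rt_step (ac_conj1 _ _ _).
Qed.

Lemma ac_insert r p q :
  ac_equiv (reduce r, reduce (p ++ q)) (reduce r, reduce (p ++ r ++ q)).
Proof.
have := ac_mul_conj r (reduce (p ++ q)) q.
by rewrite reduce_reducel -catA reduce_cancel_winv.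
Qed.

Lemma ac_delete r p q :
  ac_equiv (reduce r, reduce (p ++ r ++ q)) (reduce r, reduce (p ++ q)).
Proof.
apply: rt_trans; first exact: rt_step (ac_inv1 _ _).
rewrite finvE reduce_winv_reduce catA.
apply: rt_trans; first exact: (ac_insert _ (p ++ r)).
rewrite -catA reduce_cancel_winv.
have <- : finv (reduce (winv r)) = reduce r by rewrite finvE reduce_winv_reduce winvK.
exact: rt_step (ac_inv1 _ _).
Qed.

Inductive rel_step (r : word) : word -> word -> Prop :=
| rel_step_cancel p q a : rel_step r (p ++ a :: linv a :: q) (p ++ q)
| rel_step_rel p q : rel_step r (p ++ r ++ q) (p ++ q).

(* [rel_eq r u v] iff [u] and [v] are equal in [F / <<r>>]. *)
Definition rel_eq (r : word) : word -> word -> Prop :=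
  clos_refl_sym_trans word (rel_step r).

Lemma rel_step_ac r u v : rel_step r u v ->
  ac_equiv (reduce r, reduce u) (reduce r, reduce v) /\
  ac_equiv (reduce r, reduce v) (reduce r, reduce u).
Proof.
case=> p q => [a|]; last by split; [apply: ac_delete | apply: ac_insert].
by rewrite reduce_cancel; split; apply: rt_refl.
Qed.

Lemma rel_eq_ac r u v :
  rel_eq r u v -> ac_equiv (reduce r, reduce u) (reduce r, reduce v).
Proof.
move=> uv; suff [] : ac_equiv (reduce r, reduce u) (reduce r, reduce v) /\
                     ac_equiv (reduce r, reduce v) (reduce r, reduce u) by [].
elim: uv => {u v} [u v /rel_step_ac //|u|u v _ [uv vu]|u v w _ [uv vu] _ [vw wv]].
- by split; apply: rt_refl.
- by split.
- by split; apply: rt_trans; eassumption.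
Qed.

#[export] Instance rel_eq_Equivalence r : Equivalence (rel_eq r).
Proof. by split; [exact: rst_refl | exact: rst_sym | exact: rst_trans]. Qed.

Lemma rel_step_cat r p q u v : rel_step r u v -> rel_step r (p ++ u ++ q) (p ++ v ++ q).
Proof.
case=> p' q' => [a|]; rewrite -!catA /=.
  by have := rel_step_cancel r (p ++ p') (q' ++ q) a; rewrite -!catA.
by have := rel_step_rel r (p ++ p') (q' ++ q); rewrite -!catA.
Qed.

Lemma rel_eq_cat r p q u v : rel_eq r u v -> rel_eq r (p ++ u ++ q) (p ++ v ++ q).
Proof.
elim=> {u v} [u v uv|u|u v _|u v w _ uv _ vw].
- exact/rst_step/rel_step_cat.
- reflexivity.
- by symmetry.
- by transitivity (p ++ v ++ q).
Qed.

#[export] Instance cat_rel_eq_Proper r :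
  Proper (rel_eq r ==> rel_eq r ==> rel_eq r) (@cat letter).
Proof.
move=> u u' uu' v v' vv'.
transitivity (u' ++ v); first by have := rel_eq_cat _ [::] v _ _ uu'.
by have := rel_eq_cat _ u' [::] _ _ vv'; rewrite !cats0.
Qed.

#[export] Instance cons_rel_eq_Proper r a : Proper (rel_eq r ==> rel_eq r) (cons a).
Proof. move=> u v uv; rewrite -(cat1s a u) -(cat1s a v) uv; reflexivity. Qed.

Lemma rel_eq_relator r : rel_eq r r [::].
Proof. by apply: rst_step; have := rel_step_rel r [::] [::]; rewrite cats0. Qed.

Lemma rel_eq_linv r a : rel_eq r [:: a; linv a] [::].
Proof. exact/rst_step/(rel_step_cancel _ [::] [::]). Qed.

Lemma rel_eq_linvl r a : rel_eq r [:: linv a; a] [::].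
Proof. by rewrite -{2}(linvK a); apply: rel_eq_linv. Qed.

Lemma rel_eq_winv r w : rel_eq r (w ++ winv w) [::].
Proof.
elim: w => [|a w IH] /=; first reflexivity.
rewrite winv_cons -cats1 catA IH; exact: rel_eq_linv.
Qed.

Lemma rel_eq_winvl r w : rel_eq r (winv w ++ w) [::].
Proof. by rewrite -{2}(winvK w); apply: rel_eq_winv. Qed.

Lemma rel_eq_conj_linv r c a b : rel_eq r (a :: c) (c ++ [:: b]) ->
  rel_eq r (linv a :: c) (c ++ [:: linv b]).
Proof.
move=> ac_cb.
transitivity (linv a :: c ++ [:: b; linv b]).
  by rewrite rel_eq_linv cats0; reflexivity.
rewrite -[[:: b; _]]cat1s catA -ac_cb.
change (rel_eq r ([:: linv a; a] ++ c ++ [:: linv b]) (c ++ [:: linv b])).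
by rewrite rel_eq_linvl; reflexivity.
Qed.

Definition swapl (a : letter) : letter := (~~ a.1, a.2).

Lemma phiE w : phi w = reduce (map swapl w). Proof. by []. Qed.

Definition xyx : word := [:: x_; y_; x_].
Definition yxy : word := [:: y_; x_; y_].

Lemma AK1E : AK1 = xyx ++ winv yxy. Proof. by []. Qed.

Lemma braid_AK1 : rel_eq AK1 xyx yxy.
Proof.
transitivity (xyx ++ winv yxy ++ yxy).
  by rewrite rel_eq_winvl cats0; reflexivity.
by rewrite catA -AK1E {2}(rel_eq_relator AK1); reflexivity.
Qed.

Lemma rel_eq_AK1_swap_letter a : rel_eq AK1 (a :: xyx) (xyx ++ [:: swapl a]).
Proof.
suff gen_swap g : rel_eq AK1 ((g, false) :: xyx) (xyx ++ [:: swapl (g, false)]).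
  by case: a => g []; [exact: rel_eq_conj_linv (gen_swap g) | apply: gen_swap].
case: g.
- change (rel_eq AK1 (yxy ++ [:: x_]) (xyx ++ [:: x_])).
  by rewrite braid_AK1; reflexivity.
- change (rel_eq AK1 (x_ :: xyx) (x_ :: yxy)).
  by rewrite braid_AK1; reflexivity.
Qed.

Lemma rel_eq_AK1_swap w : rel_eq AK1 (w ++ xyx) (xyx ++ map swapl w).
Proof.
elim: w => [|a w IH]; first reflexivity.
rewrite cat_cons IH -cat_cons rel_eq_AK1_swap_letter -catA; reflexivity.
Qed.

Lemma swaplK : involutive swapl.
Proof. by case=> g i; rewrite /swapl negbK. Qed.

Lemma rel_eq_AK1_conj_swap w : rel_eq AK1 (winv xyx ++ map swapl w ++ xyx) w.
Proof.
rewrite rel_eq_AK1_swap -map_comp (eq_map swaplK) map_id catA rel_eq_winvl.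
reflexivity.
Qed.

Lemma ac_phi_AK1 w : ac_equiv (phi AK1, phi w) (AK1, reduce w).
Proof.
have phi_AK1 : finv (phi AK1) = AK1 by vm_compute.
apply: rt_trans; first exact: rt_step (ac_inv1 _ _).
apply: rt_trans; first exact: rt_step (ac_conj2 _ _ xyx).
rewrite phi_AK1 phiE fconjE reduce_reducem -[AK1 in (AK1, _)]reduce_idem.
exact/rel_eq_ac/rel_eq_AK1_conj_swap.
Qed.

Theorem lemma4 (n : nat) (hn : 3 <= n) :
  ac_equiv (phi AK1, phi (AK2 n)) (AK1, AK2 n).
Proof. by have := ac_phi_AK1 (AK2 n); rewrite [reduce (AK2 n)]reduce_idem. Qed.
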